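(* Let $H$ be a finite-dimensional Hopf algebra over a field $\Bbbk$ and $B$ a right $H$-comodule algebra. Then every projective $B$-module and every injective $B$-module belongs to $\mathcal{N}_H$; consequently every projective or injective $B$-module is isomorphic to the zero object in $\mathcal{C}(B,H)$.
   Context: $H$ has comultiplication $\Delta(h)=\sum h_1\otimes h_2$, counit $\epsilon$, antipode $S$. A right $H$-comodule algebra is a unital $\Bbbk$-algebra $B$ with a unital algebra map $\Delta_B:B\to B\otimes H$, $\Delta_B(b)=\sum b_1\otimes b_2$, that is coassociative and counital. For a $B$-module $M$ and an $H$-module $U$, $M\otimes U$ is a $B$-module via $b\cdot(x\otimes u)=\sum b_1x\otimes b_2u$. A $B$-module morphism is null-homotopic if it factors through a $B$-module of the form $N\otimes H$ ($H$ the left regular module). $\mathcal{N}_H$ denotes the class of $B$-modules whose identity morphism is null-homotopic. $\mathcal{C}(B,H)$ is the quotient of the category of $B$-modules by the ideal of null-homotopic morphisms. *)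

From HB Require Import structures.
From mathcomp Require Import all_boot all_order all_algebra.
Set Implicit Arguments. Unset Strict Implicit. Unset Printing Implicit Defensive.
Import GRing.Theory.
Local Open Scope ring_scope.

(* A finite-dimensional Hopf algebra H over a field k, of dimension n, given *)
(* by its structure constants in a k-basis e_0, ..., e_(n-1):                *)
(*   e_i e_j       = \sum_p hmul i j p e_p                                   *)
(*   1_H           = \sum_i hunit i e_i                                      *)
(*   Delta(e_p)    = \sum_(i,j) hcomul p i j e_i (x) e_j                     *)
(*   eps(e_i)      = hcounit i                                               *)
(*   S(e_i)        = \sum_j hanti i j e_j                                    *)
Record hopf_data (k : fieldType) (n : nat) := HopfData {
  hmul    : 'I_n -> 'I_n -> 'I_n -> k;
  hunit   : 'I_n -> k;
  hcomul  : 'I_n -> 'I_n -> 'I_n -> k;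
  hcounit : 'I_n -> k;
  hanti   : 'I_n -> 'I_n -> k
}.

Definition is_hopf (k : fieldType) (n : nat) (H : hopf_data k n) : Prop :=
  let m := hmul H in let u := hunit H in let d := hcomul H in
  let eps := hcounit H in let s := hanti H in
  (* associativity: (e_i e_j) e_l = e_i (e_j e_l) *)
  (forall i j l p, \sum_q m i j q * m q l p = \sum_q m j l q * m i q p) /\
  (* unit: 1 e_j = e_j = e_j 1 *)
  (forall j p, \sum_i u i * m i j p = (j == p)%:R) /\
  (forall j p, \sum_i u i * m j i p = (j == p)%:R) /\
  (* coassociativity: (Delta (x) id) Delta = (id (x) Delta) Delta *)
  (forall p a b c, \sum_i d p i c * d i a b = \sum_j d p a j * d j b c) /\
  (* counit: (eps (x) id) Delta = id = (id (x) eps) Delta *)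
  (forall p j, \sum_i d p i j * eps i = (p == j)%:R) /\
  (forall p i, \sum_j d p i j * eps j = (p == i)%:R) /\
  (* Delta is an algebra map *)
  (forall i j a b, \sum_p m i j p * d p a b =
     \sum_a1 \sum_b1 \sum_a2 \sum_b2
        d i a1 b1 * d j a2 b2 * m a1 a2 a * m b1 b2 b) /\
  (forall a b, \sum_p u p * d p a b = u a * u b) /\
  (* eps is an algebra map *)
  (forall i j, \sum_p m i j p * eps p = eps i * eps j) /\
  (\sum_p u p * eps p = 1) /\
  (* antipode: m (S (x) id) Delta = u eps = m (id (x) S) Delta *)
  (forall q p, \sum_i \sum_j \sum_l d q i j * s i l * m l j p = eps q * u p) /\
  (forall q p, \sum_i \sum_j \sum_l d q i j * s j l * m i l p = eps q * u p).

(* A right H-comodule algebra structure on a k-algebra B.  Since H is free   *)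
(* with basis (e_i), B (x) H = (+)_i B (x) e_i, and the coaction is encoded  *)
(* by its coordinates:  Delta_B(b) = \sum_i dB b i (x) e_i.                  *)
Definition is_comodule_alg (k : fieldType) (n : nat) (H : hopf_data k n)
    (B : algType k) (dB : B -> 'I_n -> B) : Prop :=
  (forall (c : k) (a b : B) i, dB (c *: a + b) i = c *: dB a i + dB b i) /\
  (* multiplicativity: Delta_B(ab) = Delta_B(a) Delta_B(b) in B (x) H *)
  (forall (a b : B) p,
     dB (a * b) p = \sum_i \sum_j hmul H i j p *: (dB a i * dB b j)) /\
  (* unitality: Delta_B(1) = 1 (x) 1_H *)
  (forall p, dB 1 p = hunit H p *: 1) /\
  (* coassociativity: (Delta_B (x) id) Delta_B = (id (x) Delta) Delta_B *)
  (forall (b : B) i j, dB (dB b j) i = \sum_p hcomul H p i j *: dB b p) /\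
  (* counitality: (id (x) eps) Delta_B = id *)
  (forall b : B, \sum_i hcounit H i *: dB b i = b).

Record bmod (B : nzRingType) := BMod {
  bcar :> zmodType;
  bact : B -> bcar -> bcar;
  bact_addr : forall b (x y : bcar), bact b (x + y) = bact b x + bact b y;
  bact_addl : forall a b (x : bcar), bact (a + b) x = bact a x + bact b x;
  bact_mul  : forall a b (x : bcar), bact (a * b) x = bact a (bact b x);
  bact_one  : forall x : bcar, bact 1 x = x
}.

Definition is_bhom (B : nzRingType) (M N : bmod B) (f : M -> N) : Prop :=
  (forall x y : M, f (x + y) = f x + f y) /\
  (forall (b : B) (x : M), f (bact b x) = bact b (f x)).

Definition projective_bmod (B : nzRingType) (P : bmod B) : Prop :=
  forall (M N : bmod B) (g : M -> N) (h : P -> N),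
    is_bhom g -> (forall y : N, exists x : M, g x = y) -> is_bhom h ->
    exists h' : P -> M, is_bhom h' /\ (forall x : P, g (h' x) = h x).

Definition injective_bmod (B : nzRingType) (I : bmod B) : Prop :=
  forall (M N : bmod B) (g : M -> N) (h : M -> I),
    is_bhom g -> (forall x y : M, g x = g y -> x = y) -> is_bhom h ->
    exists h' : N -> I, is_bhom h' /\ (forall x : M, h' (g x) = h x).

(* The B-module N (x) H, realised on {ffun 'I_n -> N} (x_p <-> x_p (x) e_p), *)
(* with b . (x (x) u) = \sum b_1 x (x) b_2 u.  For x = \sum_j x_j (x) e_j:   *)
(*   b . x = \sum_(i,j) (dB b i) x_j (x) e_i e_j                             *)
(*         = \sum_p (\sum_(i,j) hmul i j p (dB b i) x_j) (x) e_p.            *)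
(* The k-structure of N is the one induced by B (c . y = (c *: 1_B) . y).    *)
Definition tensH_act (k : fieldType) (n : nat) (H : hopf_data k n)
    (B : algType k) (dB : B -> 'I_n -> B) (N : bmod B)
    (b : B) (x : {ffun 'I_n -> N}) : {ffun 'I_n -> N} :=
  [ffun p => \sum_i \sum_j bact (hmul H i j p *: dB b i) (x j)].

Definition is_bhom_to_tensH (k : fieldType) (n : nat) (H : hopf_data k n)
    (B : algType k) (dB : B -> 'I_n -> B) (M N : bmod B)
    (f : M -> {ffun 'I_n -> N}) : Prop :=
  (forall x y : M, f (x + y) = f x + f y) /\
  (forall (b : B) (x : M), f (bact b x) = tensH_act H dB b (f x)).

Definition is_bhom_from_tensH (k : fieldType) (n : nat) (H : hopf_data k n)
    (B : algType k) (dB : B -> 'I_n -> B) (N M : bmod B)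
    (g : {ffun 'I_n -> N} -> M) : Prop :=
  (forall x y : {ffun 'I_n -> N}, g (x + y) = g x + g y) /\
  (forall (b : B) (x : {ffun 'I_n -> N}), g (tensH_act H dB b x) = bact b (g x)).

Definition null_homotopic (k : fieldType) (n : nat) (H : hopf_data k n)
    (B : algType k) (dB : B -> 'I_n -> B) (M M' : bmod B) (phi : M -> M') : Prop :=
  exists (N : bmod B) (f : M -> {ffun 'I_n -> N}) (g : {ffun 'I_n -> N} -> M'),
    is_bhom_to_tensH H dB f /\ is_bhom_from_tensH H dB g /\
    (forall x : M, g (f x) = phi x).

Definition in_NH (k : fieldType) (n : nat) (H : hopf_data k n)
    (B : algType k) (dB : B -> 'I_n -> B) (M : bmod B) : Prop :=
  null_homotopic H dB (fun x : M => x).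

(* M is isomorphic to the zero object in the quotient category C(B,H):       *)
(* there are morphisms M -> 0 -> M whose composite equals id_M modulo the    *)
(* ideal of null-homotopic morphisms, i.e. id_M - 0 = id_M is null-homotopic *)
(* (the other composite 0 -> M -> 0 is automatically the identity).          *)
Definition iso_zero_in_C (k : fieldType) (n : nat) (H : hopf_data k n)
    (B : algType k) (dB : B -> 'I_n -> B) (M : bmod B) : Prop :=
  null_homotopic H dB (fun x : M => x - (0 : M)).

From mathcomp Require Import all_boot all_order all_algebra.
Set Implicit Arguments. Unset Strict Implicit. Unset Printing Implicit Defensive.
Import GRing.Theory.
Local Open Scope ring_scope.

(* For a B-module M, the counit gives a surjective B-linear map M (x) H -> M,
   m (x) h |-> eps(h) m, and a nonzero left integral t of H (h t = eps(h) t) gives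
   an injective B-linear map M -> M (x) H, m |-> m (x) t.  If M is projective the
   first map splits, if M is injective the second one does; either way id_M
   factors through M (x) H.
   Nonzero left integrals exist because H is finite-dimensional: for a basis (e_i)
   with dual basis (e^i), each t_q := \sum_i e_i(1) e^i(S^2(e_i(2)) e_q) is a left
   integral, and \sum_q t_q(1) e^q(S(t_q(2)) e_c) = e_c, so the t_q are not all 0. *)

(* An element [\sum_r w r e_r] of H is only ever observed through its pairings
   [lc w G] with arbitrary coefficient functionals [G], and an element of H (x) H
   through [lc2]; identities of H are stated for all [G], so that products become
   compositions of pairings ([lc_comp]) and rewriting can go under binders. *)
Section Pairings.

Variables (k : fieldType) (n : nat).
Implicit Types (w v G : 'I_n -> k) (d e F : 'I_n -> 'I_n -> k).

Definition lc w G : k := \sum_r w r * G r.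
Definition lc2 d F : k := \sum_a lc (d a) (F a).

Lemma eq_lc w G G' : G =1 G' -> lc w G = lc w G'.
Proof. by move=> eqG; apply: eq_bigr => r _; rewrite eqG. Qed.

Lemma eq_lc_coef w w' G : w =1 w' -> lc w G = lc w' G.
Proof. by move=> eqw; apply: eq_bigr => r _; rewrite eqw. Qed.

Lemma lc_mull w G c : lc w (fun r => c * G r) = c * lc w G.
Proof. by rewrite /lc mulr_sumr; apply: eq_bigr => r _; rewrite mulrCA. Qed.

Lemma lc_mulr w G c : lc w (fun r => G r * c) = lc w G * c.
Proof. by rewrite /lc mulr_suml; apply: eq_bigr => r _; rewrite mulrA. Qed.

Lemma lc_mul_coef w G c : lc (fun r => c * w r) G = c * lc w G.
Proof. by rewrite /lc mulr_sumr; apply: eq_bigr => r _; rewrite mulrA. Qed.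

Lemma lc_sum (I : finType) w (F : I -> 'I_n -> k) :
  lc w (fun r => \sum_x F x r) = \sum_x lc w (F x).
Proof. by rewrite /lc exchange_big; apply: eq_bigr => r _; rewrite mulr_sumr. Qed.

Lemma sum_mul_lc w X (Y : 'I_n -> 'I_n -> k) :
  \sum_c X c * lc w (Y c) = lc w (fun a => \sum_c X c * Y c a).
Proof. by under eq_bigr do rewrite -lc_mull; rewrite -lc_sum. Qed.

Lemma exchange_lc w v F :
  lc w (fun r => lc v (F r)) = lc v (fun s => lc w (F^~ s)).
Proof.
rewrite /lc; under eq_bigr do rewrite mulr_sumr.
rewrite exchange_big; apply: eq_bigr => s _; rewrite mulr_sumr.
by apply: eq_bigr => r _; rewrite mulrCA.
Qed.

Lemma lc_comp w (v : 'I_n -> 'I_n -> k) G :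
  lc w (fun q => lc (v q) G) = lc (fun p => lc w (v^~ p)) G.
Proof.
rewrite /lc; under eq_bigr do rewrite mulr_sumr.
rewrite exchange_big; apply: eq_bigr => p _; rewrite mulr_suml.
by apply: eq_bigr => q _; rewrite mulrA.
Qed.

Lemma lc_delta w i : lc w (fun r => (r == i)%:R) = w i.
Proof.
rewrite /lc (bigD1 i) //= eqxx mulr1 big1 ?addr0 // => r /negbTE ->.
by rewrite mulr0.
Qed.

Lemma lc_delta_coef G i : lc (fun r => (r == i)%:R) G = G i.
Proof.
rewrite /lc (bigD1 i) //= eqxx mul1r big1 ?addr0 // => r /negbTE ->.
by rewrite mul0r.
Qed.

Lemma sum_mul_delta F : \sum_c \sum_w F w c * (c == w)%:R = \sum_c F c c.
Proof.
apply: eq_bigr => c _; rewrite (bigD1 c) //= eqxx mulr1 big1 ?addr0 // => w.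
by rewrite eq_sym => /negbTE ->; rewrite mulr0.
Qed.

Lemma eq_lc2 d F F' : (forall a b, F a b = F' a b) -> lc2 d F = lc2 d F'.
Proof. by move=> eqF; apply: eq_bigr => a _; apply: eq_lc => b; rewrite eqF. Qed.

Lemma eq_lc2_coef d d' F : (forall a b, d a b = d' a b) -> lc2 d F = lc2 d' F.
Proof. by move=> eqd; apply: eq_bigr => a _; apply: eq_lc_coef => b; rewrite eqd. Qed.

Lemma lc2_mull d F c : lc2 d (fun a b => c * F a b) = c * lc2 d F.
Proof. by rewrite /lc2 mulr_sumr; apply: eq_bigr => a _; rewrite lc_mull. Qed.

Lemma lc2_sum (I : finType) d (F : I -> 'I_n -> 'I_n -> k) :
  lc2 d (fun a b => \sum_x F x a b) = \sum_x lc2 d (F x).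
Proof. by rewrite /lc2; under eq_bigr do rewrite lc_sum; exact: exchange_big. Qed.

Lemma exchange_lc2_lc d w (F : 'I_n -> 'I_n -> 'I_n -> k) :
  lc2 d (fun a b => lc w (F a b)) = lc w (fun r => lc2 d (fun a b => F a b r)).
Proof. by rewrite /lc2; under eq_bigr do rewrite exchange_lc; rewrite -lc_sum. Qed.

Lemma exchange_lc2 d e (F : 'I_n -> 'I_n -> 'I_n -> 'I_n -> k) :
  lc2 d (fun a b => lc2 e (F a b)) = lc2 e (fun x y => lc2 d (fun a b => F a b x y)).
Proof.
rewrite /lc2; under eq_bigr do rewrite lc_sum.
rewrite exchange_big; apply: eq_bigr => x _.
by under eq_bigr do rewrite exchange_lc; rewrite -lc_sum.
Qed.

Lemma lc2_comp e (c : 'I_n -> 'I_n -> 'I_n -> 'I_n -> k) F :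
  lc2 e (fun x y => lc2 (c x y) F) = lc2 (fun a b => lc2 e (fun x y => c x y a b)) F.
Proof.
rewrite /lc2 /lc; under eq_bigr do under eq_bigr do rewrite mulr_sumr.
under eq_bigr do rewrite exchange_big /=.
rewrite exchange_big /=; apply: eq_bigr => a _.
under eq_bigr do under eq_bigr do rewrite mulr_sumr.
under eq_bigr do rewrite exchange_big /=.
rewrite exchange_big /=; apply: eq_bigr => b _.
rewrite mulr_suml; apply: eq_bigr => x _; rewrite mulr_suml.
by apply: eq_bigr => y _; rewrite mulrA.
Qed.

Lemma lc_lc2_comp w (d : 'I_n -> 'I_n -> 'I_n -> k) F :
  lc w (fun p => lc2 (d p) F) = lc2 (fun a b => lc w (fun p => d p a b)) F.
Proof.
rewrite /lc2 /lc; under eq_bigr do rewrite mulr_sumr.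
rewrite exchange_big /=; apply: eq_bigr => a _.
under eq_bigr do rewrite mulr_sumr.
rewrite exchange_big /=; apply: eq_bigr => b _.
by rewrite mulr_suml; apply: eq_bigr => p _; rewrite mulrA.
Qed.

Lemma lc2_lc_comp d (w : 'I_n -> 'I_n -> 'I_n -> k) G :
  lc2 d (fun a b => lc (w a b) G) = lc (fun r => lc2 d (fun a b => w a b r)) G.
Proof.
rewrite /lc2 /lc; under eq_bigr do under eq_bigr do rewrite mulr_sumr.
under eq_bigr do rewrite exchange_big /=.
rewrite exchange_big /=; apply: eq_bigr => r _; rewrite mulr_suml.
apply: eq_bigr => a _; rewrite mulr_suml.
by apply: eq_bigr => b _; rewrite mulrA.
Qed.

Lemma lc_lc w v F : lc w (fun a => lc v (F a)) = lc2 (fun a b => w a * v b) F.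
Proof.
apply: eq_bigr => a _; rewrite -lc_mull; apply: eq_bigr => b _.
by rewrite mulrCA mulrA.
Qed.

Lemma lc2_delta d r G : lc2 d (fun x a => (x == r)%:R * G a) = lc (d r) G.
Proof.
rewrite /lc2; under eq_bigr do rewrite lc_mull.
rewrite (bigD1 r) //= eqxx mul1r big1 ?addr0 // => x /negbTE ->.
by rewrite mul0r.
Qed.

Lemma lc2_nestl_expand (d : 'I_n -> 'I_n -> 'I_n -> k) p
    (F : 'I_n -> 'I_n -> 'I_n -> k) :
  lc2 (d p) (fun i c => lc2 (d i) (fun a b => F a b c)) =
  \sum_a \sum_b \sum_c (\sum_i d p i c * d i a b) * F a b c.
Proof.
rewrite /lc2 /lc.
under eq_bigr do under eq_bigr do rewrite mulr_sumr.
under eq_bigr do rewrite exchange_big /=.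
rewrite exchange_big /=; apply: eq_bigr => a _.
under eq_bigr do under eq_bigr do rewrite mulr_sumr.
under eq_bigr do rewrite exchange_big /=.
rewrite exchange_big /=; apply: eq_bigr => b _.
rewrite exchange_big /=; apply: eq_bigr => c _.
by rewrite mulr_suml; apply: eq_bigr => i _; rewrite mulrA.
Qed.

Lemma lc2_nestr_expand (d : 'I_n -> 'I_n -> 'I_n -> k) p
    (F : 'I_n -> 'I_n -> 'I_n -> k) :
  lc2 (d p) (fun a j => lc2 (d j) (fun b c => F a b c)) =
  \sum_a \sum_b \sum_c (\sum_j d p a j * d j b c) * F a b c.
Proof.
rewrite /lc2 /lc; apply: eq_bigr => a _.
under eq_bigr do rewrite mulr_sumr.
rewrite exchange_big /=; apply: eq_bigr => b _.
under eq_bigr do rewrite mulr_sumr.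
rewrite exchange_big /=; apply: eq_bigr => c _.
by rewrite mulr_suml; apply: eq_bigr => j _; rewrite mulrA.
Qed.

End Pairings.

Section HopfIdentities.

Variables (k : fieldType) (n : nat) (H : hopf_data k n).
Hypothesis hH : is_hopf H.
Implicit Types (G : 'I_n -> k).

Local Notation mu := (hmul H).
Local Notation eta := (hunit H).
Local Notation Delta := (hcomul H).
Local Notation eps := (hcounit H).
Local Notation anti := (hanti H).

Lemma mulhA i j l G :
  lc (mu i j) (fun q => lc (mu q l) G) = lc (mu j l) (fun q => lc (mu i q) G).
Proof.
by case: hH => mulA _; rewrite !lc_comp; apply: eq_lc_coef => p; exact: mulA.
Qed.

Lemma mul1h j G : lc eta (fun i => lc (mu i j) G) = G j.
Proof.
case: hH => _ [mul1 _]; rewrite lc_comp -[RHS]lc_delta_coef.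
by apply: eq_lc_coef => p; rewrite /lc mul1 eq_sym.
Qed.

Lemma mulh1 j G : lc eta (fun i => lc (mu j i) G) = G j.
Proof.
case: hH => _ [_ [mul1 _]]; rewrite lc_comp -[RHS]lc_delta_coef.
by apply: eq_lc_coef => p; rewrite /lc mul1 eq_sym.
Qed.

Lemma mul1h_coef c w : lc eta (fun p => mu p c w) = (c == w)%:R.
Proof. by case: hH => _ [mul1 _]; apply: mul1. Qed.

Lemma comulA p (F : 'I_n -> 'I_n -> 'I_n -> k) :
  lc2 (Delta p) (fun i c => lc2 (Delta i) (fun a b => F a b c)) =
  lc2 (Delta p) (fun a j => lc2 (Delta j) (fun b c => F a b c)).
Proof.
case: hH => _ [_ [_ [coA _]]]; rewrite lc2_nestl_expand lc2_nestr_expand.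
by apply: eq_bigr => a _; apply: eq_bigr => b _; apply: eq_bigr => c _; rewrite coA.
Qed.

Lemma comul_counitl p G : lc2 (Delta p) (fun i j => eps i * G j) = G p.
Proof.
case: hH => _ [_ [_ [_ [counitl _]]]]; rewrite /lc2 /lc.
under eq_bigr do under eq_bigr do rewrite mulrA.
rewrite exchange_big /=; under eq_bigr do rewrite -mulr_suml counitl.
rewrite (bigD1 p) //= eqxx mul1r big1 ?addr0 // => j /negbTE.
by rewrite eq_sym => ->; rewrite mul0r.
Qed.

Lemma comul_counitr p G : lc2 (Delta p) (fun i j => G i * eps j) = G p.
Proof.
case: hH => _ [_ [_ [_ [_ [counitr _]]]]]; rewrite /lc2 /lc.
under eq_bigr do under eq_bigr do rewrite mulrCA.
under eq_bigr do rewrite -mulr_sumr counitr.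
rewrite (bigD1 p) //= eqxx mulr1 big1 ?addr0 // => j /negbTE.
by rewrite eq_sym => ->; rewrite mulr0.
Qed.

Lemma comulM i j (F : 'I_n -> 'I_n -> k) :
  lc (mu i j) (fun p => lc2 (Delta p) F) =
  lc2 (Delta i) (fun a1 b1 => lc2 (Delta j) (fun a2 b2 =>
     lc (mu a1 a2) (fun a => lc (mu b1 b2) (F a)))).
Proof.
case: hH => _ [_ [_ [_ [_ [_ [comul_mul _]]]]]]; rewrite lc_lc2_comp.
under [RHS]eq_lc2 do under eq_lc2 do rewrite lc_lc.
under [RHS]eq_lc2 do rewrite lc2_comp.
rewrite lc2_comp; apply: eq_lc2_coef => a b.
rewrite /lc comul_mul /lc2 /lc; apply: eq_bigr => a1 _; apply: eq_bigr => b1 _.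
rewrite mulr_sumr; apply: eq_bigr => a2 _; rewrite mulr_sumr; apply: eq_bigr => b2 _.
by rewrite !mulrA.
Qed.

Lemma comul1 (F : 'I_n -> 'I_n -> k) :
  lc eta (fun p => lc2 (Delta p) F) = lc eta (fun a => lc eta (F a)).
Proof.
case: hH => _ [_ [_ [_ [_ [_ [_ [comul_one _]]]]]]].
rewrite lc_lc2_comp lc_lc; apply: eq_lc2_coef => a b; exact: comul_one.
Qed.

Lemma counitM i j : lc (mu i j) eps = eps i * eps j.
Proof. by case: hH => _ [_ [_ [_ [_ [_ [_ [_ [eps_mul _]]]]]]]]; apply: eps_mul. Qed.

Lemma counit1 : lc eta eps = 1.
Proof. by case: hH => _ [_ [_ [_ [_ [_ [_ [_ [_ [counit_one _]]]]]]]]]. Qed.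

Lemma antipode_convl q G :
  lc2 (Delta q) (fun i j => lc (anti i) (fun l => lc (mu l j) G)) = eps q * lc eta G.
Proof.
case: hH => _ [_ [_ [_ [_ [_ [_ [_ [_ [_ [antil _]]]]]]]]]].
under eq_lc2 do rewrite lc_comp.
rewrite lc2_lc_comp -lc_mul_coef; apply: eq_lc_coef => p.
rewrite -antil /lc2 /lc; apply: eq_bigr => i _; apply: eq_bigr => j _.
by rewrite mulr_sumr; apply: eq_bigr => l _; rewrite !mulrA.
Qed.

Lemma antipode_convr q G :
  lc2 (Delta q) (fun i j => lc (anti j) (fun l => lc (mu i l) G)) = eps q * lc eta G.
Proof.
case: hH => _ [_ [_ [_ [_ [_ [_ [_ [_ [_ [_ antir]]]]]]]]]].
under eq_lc2 do rewrite lc_comp.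
rewrite lc2_lc_comp -lc_mul_coef; apply: eq_lc_coef => p.
rewrite -antir /lc2 /lc; apply: eq_bigr => i _; apply: eq_bigr => j _.
by rewrite mulr_sumr; apply: eq_bigr => l _; rewrite !mulrA.
Qed.

(* The convolution algebra of bilinear maps [H (x) H -> H], a map [f] being given
   by the coefficients [f a b r] of [f (e_a, e_b)]; [S (a b) = S b S a] follows
   because [S \o mu] is a left and [mu \o (S (x) S) \o flip] a right convolution
   inverse of [mu]. *)
Definition conv (f g : 'I_n -> 'I_n -> 'I_n -> k) a b r :=
  lc2 (Delta a) (fun a1 a2 => lc2 (Delta b) (fun b1 b2 =>
    lc (f a1 b1) (fun x => lc (g a2 b2) (fun y => mu x y r)))).

Definition conv_unit a b r := eps a * eps b * eta r.
Definition antipode_flip a b r :=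
  lc (anti b) (fun x => lc (anti a) (fun y => mu x y r)).
Definition antipode_of_mul a b r := lc (mu a b) (fun p => anti p r).

Lemma lc_conv f g a b G :
  lc (conv f g a b) G = lc2 (Delta a) (fun a1 a2 => lc2 (Delta b) (fun b1 b2 =>
    lc (f a1 b1) (fun x => lc (g a2 b2) (fun y => lc (mu x y) G)))).
Proof.
rewrite /conv -lc2_lc_comp; apply: eq_lc2 => a1 a2.
rewrite -lc2_lc_comp; apply: eq_lc2 => b1 b2.
by rewrite -lc_comp; apply: eq_lc => x; rewrite -lc_comp.
Qed.

Lemma eq_lc_conv f f' g g' :
  (forall a b G, lc (f a b) G = lc (f' a b) G) ->
  (forall a b G, lc (g a b) G = lc (g' a b) G) ->
  forall a b G, lc (conv f g a b) G = lc (conv f' g' a b) G.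
Proof.
move=> eqf eqg a b G; rewrite !lc_conv; apply: eq_lc2 => a1 a2; apply: eq_lc2 => b1 b2.
by rewrite eqf; apply: eq_lc => x; rewrite eqg.
Qed.

Lemma convA f g h a b G :
  lc (conv (conv f g) h a b) G = lc (conv f (conv g h) a b) G.
Proof.
rewrite !lc_conv.
under eq_lc2 do under eq_lc2 do rewrite lc_conv.
under [RHS]eq_lc2 do under eq_lc2 do under eq_lc do rewrite lc_conv.
under eq_lc2 do rewrite exchange_lc2.
rewrite (comulA a (fun a1 a2 a3 => lc2 (Delta b) (fun b1 b2 => lc2 (Delta b1)
  (fun b11 b12 => lc (f a1 b11) (fun x => lc (g a2 b12) (fun y => lc (mu x y)
     (fun z => lc (h a3 b2) (fun w => lc (mu z w) G)))))))).
under eq_lc2 => a0 j do under eq_lc2 => b0 c do rewrite (comulA b (fun b1 b2 b3 =>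
  lc (f a0 b1) (fun x => lc (g b0 b2) (fun y => lc (mu x y)
     (fun z => lc (h c b3) (fun w => lc (mu z w) G)))))).
under [RHS]eq_lc2 => a0 a' do under eq_lc2 => b0 b' do rewrite -exchange_lc2_lc.
under [RHS]eq_lc2 => a0 a' do under eq_lc2 => b0 b' do
  under eq_lc2 => a1 a2 do rewrite -exchange_lc2_lc.
under [RHS]eq_lc2 => a0 a' do rewrite exchange_lc2.
apply: eq_lc2 => a0 a'; apply: eq_lc2 => a1 a2; apply: eq_lc2 => b0 b'.
apply: eq_lc2 => b1 b2; apply: eq_lc => x; apply: eq_lc => y.
by rewrite exchange_lc; apply: eq_lc => w; rewrite mulhA.
Qed.

Lemma conv1f f a b G : lc (conv conv_unit f a b) G = lc (f a b) G.
Proof.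
rewrite lc_conv.
under eq_lc2 do under eq_lc2 do rewrite /conv_unit lc_mul_coef exchange_lc.
under eq_lc2 do under eq_lc2 do under eq_lc do rewrite mul1h.
under eq_lc2 do under eq_lc2 do rewrite -mulrA mulrCA.
under eq_lc2 => a1 a2 do rewrite (comul_counitl b (fun b2 => eps a1 * lc (f a2 b2) G)).
exact: (comul_counitl a (fun a2 => lc (f a2 b) G)).
Qed.

Lemma convf1 f a b G : lc (conv f conv_unit a b) G = lc (f a b) G.
Proof.
rewrite lc_conv.
under eq_lc2 do under eq_lc2 do under eq_lc do rewrite /conv_unit lc_mul_coef mulh1.
under eq_lc2 do under eq_lc2 do rewrite lc_mull mulrC mulrA.
under eq_lc2 => a1 a2 do rewrite (comul_counitr b (fun b1 => lc (f a1 b1) G * eps a2)).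
exact: (comul_counitr a (fun a1 => lc (f a1 b) G)).
Qed.

Lemma conv_mul_antipode_flip a b G :
  lc (conv mu antipode_flip a b) G = lc (conv_unit a b) G.
Proof.
rewrite lc_conv /conv_unit lc_mul_coef.
under eq_lc2 do under eq_lc2 do under eq_lc do rewrite /antipode_flip -lc_comp.
under eq_lc2 do under eq_lc2 do under eq_lc do under eq_lc do rewrite -lc_comp.
under eq_lc2 do under eq_lc2 do under eq_lc do under eq_lc do under eq_lc do
  rewrite -mulhA.
under eq_lc2 do under eq_lc2 do under eq_lc do rewrite exchange_lc.
under eq_lc2 do under eq_lc2 do rewrite exchange_lc.
under eq_lc2 do under eq_lc2 do under eq_lc do rewrite exchange_lc.
under eq_lc2 do under eq_lc2 do under eq_lc do under eq_lc do rewrite mulhA.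
under eq_lc2 do rewrite exchange_lc2_lc.
under eq_lc2 do under eq_lc do rewrite antipode_convr mulh1.
under eq_lc2 do rewrite lc_mull.
by rewrite lc2_mull antipode_convr mulrA [eps b * _]mulrC.
Qed.

Lemma conv_antipode_of_mul_mul a b G :
  lc (conv antipode_of_mul mu a b) G = lc (conv_unit a b) G.
Proof.
rewrite lc_conv /conv_unit lc_mul_coef.
under eq_lc2 do under eq_lc2 do rewrite /antipode_of_mul -lc_comp.
under eq_lc2 do under eq_lc2 do under eq_lc do rewrite exchange_lc.
rewrite -(comulM a b (fun p y => lc (anti p) (fun x => lc (mu x y) G))).
under eq_lc do rewrite antipode_convl.
by rewrite lc_mulr counitM.
Qed.

Lemma antipodeM a b G :
  lc (mu a b) (fun p => lc (anti p) G) =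
  lc (anti b) (fun x => lc (anti a) (fun y => lc (mu x y) G)).
Proof.
have -> : lc (mu a b) (fun p => lc (anti p) G) = lc (antipode_of_mul a b) G.
  by rewrite /antipode_of_mul -lc_comp.
have -> : lc (anti b) (fun x => lc (anti a) (fun y => lc (mu x y) G)) =
          lc (antipode_flip a b) G.
  by rewrite /antipode_flip -lc_comp; apply: eq_lc => x; rewrite -lc_comp.
rewrite -convf1 (@eq_lc_conv _ antipode_of_mul _ (conv mu antipode_flip)) //;
  last first.
  by move=> ? ? ?; rewrite conv_mul_antipode_flip.
rewrite -convA (@eq_lc_conv _ conv_unit antipode_flip antipode_flip) ?conv1f //.
by move=> ? ? ?; rewrite conv_antipode_of_mul_mul.
Qed.

Lemma antipode1 G : lc eta (fun p => lc (anti p) G) = lc eta G.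
Proof.
rewrite -[RHS]mul1r -counit1 -lc_mulr.
under [RHS]eq_lc do rewrite -antipode_convl.
rewrite comul1; apply: eq_lc => i.
by rewrite exchange_lc; apply: eq_lc => l; rewrite mulh1.
Qed.

Lemma antipode2_convl h G :
  lc2 (Delta h) (fun h1 h2 => lc (anti h1) (fun l => lc (anti h2) (fun x =>
     lc (anti l) (fun y => lc (mu x y) G)))) = eps h * lc eta G.
Proof.
rewrite -antipode1 -antipode_convl; apply: eq_lc2 => i j; apply: eq_lc => l.
by rewrite antipodeM.
Qed.

Lemma antipode2_convr h G :
  lc2 (Delta h) (fun h1 h2 => lc (anti h2) (fun b => lc (anti b) (fun x =>
     lc (anti h1) (fun y => lc (mu x y) G)))) = eps h * lc eta G.
Proof.
rewrite -antipode1 -antipode_convr; apply: eq_lc2 => i j; apply: eq_lc => l.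
by rewrite antipodeM.
Qed.

(* Coefficients of [e_i] in [S(e_a) e_q] and in [S^2(e_a) e_q], and of [e_x] in
   [t_q := \sum_i e_i(1) e^i(S^2(e_i(2)) e_q)], where [e^i] is the dual basis. *)
Definition antipode_mul a q i := lc (anti a) (fun l => mu l q i).
Definition antipode2_mul a q i :=
  lc (anti a) (fun b => lc (anti b) (fun l => mu l q i)).
Definition integral q x := \sum_i lc (Delta i x) (fun a => antipode2_mul a q i).

Lemma sum_mul_antipode_mul h1 h2 (Phi : 'I_n -> 'I_n -> k) :
  \sum_i lc (mu h1 i) (fun w => \sum_c antipode_mul h2 c i * Phi w c) =
  \sum_c \sum_w Phi w c * lc (anti h2) (fun l => lc (mu h1 l) (fun p => mu p c w)).
Proof.
have [mulA _] := hH; rewrite /lc /antipode_mul /lc.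
transitivity (\sum_c \sum_w \sum_i \sum_l
   anti h2 l * mu l c i * mu h1 i w * Phi w c).
  under eq_bigr do under eq_bigr do rewrite mulr_sumr.
  under eq_bigr do rewrite exchange_big /=.
  rewrite exchange_big /=; apply: eq_bigr => c _.
  rewrite exchange_big /=; apply: eq_bigr => w _; apply: eq_bigr => i _.
  rewrite mulr_suml mulr_sumr; apply: eq_bigr => l _.
  by rewrite mulrA [mu h1 i w * _]mulrC.
apply: eq_bigr => c _; apply: eq_bigr => w _.
rewrite [RHS]mulrC mulr_suml.
under [RHS]eq_bigr => l _ do rewrite mulA.
rewrite exchange_big /=; apply: eq_bigr => l _.
by rewrite mulr_sumr mulr_suml; apply: eq_bigr => i _; rewrite !mulrA.
Qed.

(* [\sum_i h1 e_i (x) e^i(S(h2) -) = eps(h) \sum_i e_i (x) e^i], paired with [Phi]. *)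
Lemma dual_basis_invariant h (Phi : 'I_n -> 'I_n -> k) :
  \sum_i lc2 (Delta h) (fun h1 h2 =>
    lc (mu h1 i) (fun w => \sum_c antipode_mul h2 c i * Phi w c)) =
  eps h * \sum_i Phi i i.
Proof.
rewrite -lc2_sum.
under eq_lc2 do rewrite sum_mul_antipode_mul.
rewrite lc2_sum; under eq_bigr do rewrite lc2_sum.
under eq_bigr do under eq_bigr do rewrite lc2_mull antipode_convr mul1h_coef mulrCA.
rewrite -sum_mul_delta mulr_sumr; apply: eq_bigr => c _.
by rewrite mulr_sumr.
Qed.

Lemma sum_antipode_mul_antipode2 h i a q :
  \sum_c antipode_mul h c i * antipode2_mul a q c =
  lc (anti a) (fun b => lc (anti b) (fun l => lc (anti h) (fun l' =>
     lc (mu l' l) (fun c => mu c q i)))).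
Proof.
rewrite [LHS](_ : _ = lc (antipode2_mul a q) (fun c => antipode_mul h c i)); last first.
  by rewrite /lc; apply: eq_bigr => c _; rewrite mulrC.
rewrite /antipode2_mul -lc_comp; apply: eq_lc => b; rewrite -lc_comp; apply: eq_lc => l.
rewrite /antipode_mul exchange_lc; apply: eq_lc => l'.
rewrite -[LHS](@eq_lc _ _ _ (fun c => lc (mu l' c) (fun r => (r == i)%:R))); last first.
  by move=> c; rewrite lc_delta.
by rewrite -mulhA; apply: eq_lc => c; rewrite lc_delta.
Qed.

Lemma sum_antipode2_mul_antipode a b i c :
  \sum_q antipode2_mul a q i * antipode_mul b c q =
  lc (anti a) (fun a' => lc (anti a') (fun l' => lc (anti b) (fun l =>
     lc (mu l' l) (fun p => mu p c i)))).
Proof.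
have [mulA _] := hH.
rewrite (_ : \sum_q _ = lc (antipode2_mul a ^~ i) (antipode_mul b c)) //.
rewrite /antipode2_mul -lc_comp; apply: eq_lc => a'.
rewrite -lc_comp; apply: eq_lc => l'.
rewrite /antipode_mul exchange_lc; apply: eq_lc => l.
by rewrite /lc [RHS]mulA; apply: eq_bigr => q _; rewrite mulrC.
Qed.

Lemma comul_antipode_antipode2_mul h a q i :
  lc2 (Delta h) (fun h1 h2 => lc (mu h1 a) (fun a' =>
     lc (anti a') (fun b => lc (anti b) (fun l => lc (anti h2) (fun l' =>
     lc (mu l' l) (fun c => mu c q i)))))) = eps h * antipode2_mul a q i.
Proof.
under eq_lc2 do rewrite antipodeM.
under eq_lc2 do under eq_lc do under eq_lc do rewrite antipodeM.
under eq_lc2 do under eq_lc do under eq_lc do under eq_lc do under eq_lc do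
  rewrite exchange_lc.
under eq_lc2 do under eq_lc do under eq_lc do under eq_lc do under eq_lc do
  under eq_lc do rewrite -mulhA.
under eq_lc2 do under eq_lc do under eq_lc do rewrite exchange_lc.
under eq_lc2 do under eq_lc do rewrite exchange_lc.
under eq_lc2 do under eq_lc do under eq_lc do under eq_lc do rewrite exchange_lc.
rewrite exchange_lc2_lc; under eq_lc do rewrite exchange_lc2_lc.
under eq_lc do under eq_lc do rewrite antipode2_convl mul1h.
by rewrite /antipode2_mul -lc_mull; apply: eq_lc => x; rewrite lc_mull.
Qed.

Lemma comulM_coefl h i r F :
  lc (mu h i) (fun w => lc (Delta w r) F) =
  lc2 (Delta h) (fun h1 h2 => lc2 (Delta i) (fun i1 i2 =>
    mu h1 i1 r * lc (mu h2 i2) F)).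
Proof.
under eq_lc do rewrite -lc2_delta.
rewrite comulM; apply: eq_lc2 => h1 h2; apply: eq_lc2 => i1 i2.
by under eq_lc do rewrite lc_mull; rewrite lc_mulr lc_delta.
Qed.

Lemma mul_integral_summand h q r i :
  lc2 (Delta h) (fun h1 h2 => lc (mu h1 i) (fun w =>
     \sum_c antipode_mul h2 c i * lc (Delta w r) (fun a => antipode2_mul a q c))) =
  \sum_x mu h x r * lc (Delta i x) (fun a => antipode2_mul a q i).
Proof.
under eq_lc2 do under eq_lc do rewrite sum_mul_lc.
under eq_lc2 do under eq_lc do under eq_lc do rewrite sum_antipode_mul_antipode2.
under eq_lc2 do rewrite comulM_coefl.
rewrite (comulA h (fun h1 h2 h3 => lc2 (Delta i) (fun i1 i2 =>
    mu h1 i1 r * lc (mu h2 i2) (fun a =>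
     lc (anti a) (fun b => lc (anti b) (fun l => lc (anti h3) (fun l' =>
     lc (mu l' l) (fun c => mu c q i)))))))).
under eq_lc2 do rewrite exchange_lc2.
under eq_lc2 do under eq_lc2 do rewrite lc2_mull comul_antipode_antipode2_mul mulrCA.
under eq_lc2 do rewrite lc2_mull mulrC.
rewrite (comul_counitr h (fun h1 =>
  lc2 (Delta i) (fun i1 i2 => mu h1 i1 r * antipode2_mul i2 q i))).
by rewrite /lc2; apply: eq_bigr => x _; rewrite lc_mull.
Qed.

Lemma mul_integral h q r : \sum_x mu h x r * integral q x = eps h * integral q r.
Proof.
rewrite /integral -(dual_basis_invariant h
  (fun w c => lc (Delta w r) (fun a => antipode2_mul a q c))).
under [RHS]eq_bigr do rewrite mul_integral_summand.
by rewrite exchange_big /=; apply: eq_bigr => x _; rewrite mulr_sumr.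
Qed.

(* [\sum_q t_q(1) e^q(S(t_q(2)) e_c) = e_c], read at the coefficient of [e_a]. *)
Lemma integral_comul_antipode a c :
  \sum_q \sum_x integral q x * lc (Delta x a) (fun b => antipode_mul b c q) =
  (c == a)%:R.
Proof.
transitivity (\sum_i \sum_x lc (Delta i x) (fun a' => lc (Delta x a) (fun b =>
   \sum_q antipode2_mul a' q i * antipode_mul b c q))).
  rewrite exchange_big [RHS]exchange_big /=; apply: eq_bigr => x _.
  under eq_bigr do rewrite /integral mulr_suml.
  rewrite exchange_big /=; apply: eq_bigr => i _.
  under [RHS]eq_lc do rewrite -sum_mul_lc.
  by rewrite lc_sum; apply: eq_bigr => q _; rewrite lc_mulr.
under eq_bigr do under eq_bigr do under eq_lc do under eq_lc do
  rewrite sum_antipode2_mul_antipode.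
transitivity (\sum_i lc2 (Delta i) (fun x a' => lc2 (Delta x) (fun a0 b =>
   (a0 == a)%:R * lc (anti a') (fun b' => lc (anti b') (fun l' =>
   lc (anti b) (fun l => lc (mu l' l) (fun p => mu p c i))))))).
  apply: eq_bigr => i _; apply: eq_bigr => x _.
  by apply: eq_lc => a'; rewrite lc2_delta.
under eq_bigr => i _ do rewrite (comulA i (fun a0 b a' =>
  (a0 == a)%:R * lc (anti a') (fun b' => lc (anti b') (fun l' =>
   lc (anti b) (fun l => lc (mu l' l) (fun p => mu p c i)))))).
under eq_bigr => i _ do under eq_lc2 do
  rewrite lc2_mull antipode2_convr mul1h_coef mulrCA mulrC.
under eq_bigr => i _ do
  rewrite (comul_counitr i (fun a0 => (a0 == a)%:R * (c == i)%:R)).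
rewrite (bigD1 a) //= eqxx mul1r big1 ?addr0 // => i /negbTE ->.
by rewrite mul0r.
Qed.

Lemma left_integral_exists :
  exists t : 'I_n -> k,
    (forall a r, \sum_x mu a x r * t x = eps a * t r) /\ exists p, t p != 0.
Proof.
have [a0 _] : exists a : 'I_n, True.
  case: (pickP (fun _ : 'I_n => true)) => [a0 _|none]; first by exists a0.
  by move/eqP: counit1; rewrite /lc big_pred0 // eq_sym oner_eq0.
have : ~~ [forall q, forall x, integral q x == 0].
  apply/negP => all0; move: (integral_comul_antipode a0 a0).
  rewrite eqxx big1 => [/eqP|q _]; first by rewrite eq_sym oner_eq0.
  by rewrite big1 // => x _; rewrite (eqP (forallP (forallP all0 q) x)) mul0r.
rewrite negb_forall => /existsP [q]; rewrite negb_forall => /existsP [x nz].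
by exists (integral q); split; [move=> a r; exact: mul_integral | exists x].
Qed.

End HopfIdentities.

Section ModuleSums.

Variables (B : nzRingType) (M : bmod B).

Lemma bact0l (x : M) : bact 0 x = 0.
Proof. by apply: (@addrI _ (bact 0 x)); rewrite -bact_addl !addr0. Qed.

Lemma bact0r b : bact b (0 : M) = 0.
Proof. by apply: (@addrI _ (bact b 0)); rewrite -bact_addr !addr0. Qed.

Lemma bact_suml (I : finType) (f : I -> B) (x : M) :
  bact (\sum_i f i) x = \sum_i bact (f i) x.
Proof.
apply: (big_morph (fun b => bact b x)); last exact: bact0l.
by move=> a b; rewrite bact_addl.
Qed.

Lemma bact_sumr (I : finType) b (f : I -> M) :
  bact b (\sum_i f i) = \sum_i bact b (f i).
Proof.
apply: (big_morph (fun y : M => bact b y)); last exact: bact0r.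
by move=> x y; rewrite bact_addr.
Qed.

End ModuleSums.

Section TensorWithH.

Variables (k : fieldType) (n : nat) (H : hopf_data k n).
Variables (B : algType k) (dB : B -> 'I_n -> B).
Hypotheses (hH : is_hopf H) (hB : is_comodule_alg H dB).
Variable N : bmod B.
Implicit Types (x y : {ffun 'I_n -> N}).

Local Notation act := (tensH_act H dB).

Lemma comoduleD a b i : dB (a + b) i = dB a i + dB b i.
Proof. by case: hB => lin _; have := lin 1 a b i; rewrite !scale1r. Qed.

Lemma tensH_actDr b x y : act b (x + y) = act b x + act b y.
Proof.
apply/ffunP => p; rewrite !ffunE -big_split; apply: eq_bigr => i _.
by rewrite -big_split; apply: eq_bigr => j _; rewrite ffunE bact_addr.
Qed.

Lemma tensH_actDl a b x : act (a + b) x = act a x + act b x.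
Proof.
apply/ffunP => p; rewrite !ffunE -big_split; apply: eq_bigr => i _.
by rewrite -big_split; apply: eq_bigr => j _; rewrite comoduleD scalerDr bact_addl.
Qed.

Lemma tensH_act1 x : act 1 x = x.
Proof.
have [_ [mul1 _]] := hH; have [_ [_ [comodule1 _]]] := hB.
apply/ffunP => p; rewrite !ffunE exchange_big /=.
under eq_bigr do under eq_bigr do rewrite comodule1 scalerA mulrC.
under eq_bigr do rewrite -bact_suml -scaler_suml mul1.
rewrite (bigD1 p) //= eqxx scale1r bact_one big1 ?addr0 // => j /negbTE ->.
by rewrite scale0r bact0l.
Qed.

Lemma comoduleM_coef a b j p :
  \sum_i hmul H i j p *: dB (a * b) i =
  \sum_i \sum_l (\sum_q hmul H i l q * hmul H q j p) *: (dB a i * dB b l).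
Proof.
have [_ [comoduleM _]] := hB.
under eq_bigr do rewrite comoduleM scaler_sumr.
under eq_bigr do under eq_bigr do rewrite scaler_sumr.
under eq_bigr do under eq_bigr do under eq_bigr do rewrite scalerA.
rewrite exchange_big /=; apply: eq_bigr => i _.
rewrite exchange_big /=; apply: eq_bigr => l _.
by rewrite scaler_suml; apply: eq_bigr => q _; rewrite mulrC.
Qed.

Lemma tensH_actM a b x : act (a * b) x = act a (act b x).
Proof.
have [mulA _] := hH.
apply/ffunP => p; rewrite !ffunE.
transitivity (\sum_j bact (\sum_i \sum_l
    (\sum_q hmul H i l q * hmul H q j p) *: (dB a i * dB b l)) (x j)).
  rewrite exchange_big /=; apply: eq_bigr => j _.
  by rewrite -bact_suml -comoduleM_coef.
symmetry.
under eq_bigr do under eq_bigr do rewrite !ffunE bact_sumr.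
under eq_bigr do under eq_bigr do under eq_bigr do rewrite bact_sumr.
under eq_bigr do under eq_bigr do under eq_bigr do under eq_bigr do rewrite -bact_mul.
under eq_bigr do under eq_bigr do rewrite exchange_big /=.
under eq_bigr do rewrite exchange_big /=.
rewrite exchange_big /=; apply: eq_bigr => j _.
under eq_bigr do under eq_bigr do rewrite -bact_suml.
under eq_bigr do rewrite -bact_suml.
rewrite -bact_suml; congr bact; apply: eq_bigr => i _.
transitivity (\sum_q \sum_l (hmul H i q p * hmul H l j q) *: (dB a i * dB b l)).
  apply: eq_bigr => q _; apply: eq_bigr => l _.
  by rewrite -scalerAl -scalerAr scalerA.
rewrite exchange_big /=; apply: eq_bigr => l _.
by rewrite -scaler_suml mulA; congr (_ *: _); apply: eq_bigr => q _; rewrite mulrC.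
Qed.

Definition tensH_bmod : bmod B :=
  BMod tensH_actDr tensH_actDl tensH_actM tensH_act1.

Definition counit_proj x : N := \sum_p bact (hcounit H p)%:A (x p).

Definition tensorH (y : N) (t : 'I_n -> k) : {ffun 'I_n -> N} :=
  [ffun p => bact (t p)%:A y].

Lemma counit_projD x y : counit_proj (x + y) = counit_proj x + counit_proj y.
Proof.
by rewrite /counit_proj -big_split; apply: eq_bigr => p _; rewrite ffunE bact_addr.
Qed.

Lemma counit_projM b x : counit_proj (act b x) = bact b (counit_proj x).
Proof.
have [_ [_ [_ [_ [_ [_ [_ [_ [eps_mul _]]]]]]]]] := hH.
have [_ [_ [_ [_ comodule_counit]]]] := hB.
rewrite /counit_proj bact_sumr.
under [RHS]eq_bigr do rewrite -bact_mul.
transitivity (\sum_p \sum_i \sum_j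
    bact ((hcounit H p)%:A * (hmul H i j p *: dB b i)) (x j)).
  apply: eq_bigr => p _; rewrite ffunE bact_sumr; apply: eq_bigr => i _.
  by rewrite bact_sumr; apply: eq_bigr => j _; rewrite bact_mul.
rewrite exchange_big /=; under eq_bigr do rewrite exchange_big /=.
rewrite exchange_big /=; apply: eq_bigr => j _.
under eq_bigr do rewrite -bact_suml.
rewrite -bact_suml; congr bact.
transitivity (\sum_i (\sum_p hmul H i j p * hcounit H p) *: dB b i).
  apply: eq_bigr => i _; rewrite scaler_suml; apply: eq_bigr => p _.
  by rewrite mulr_algl scalerA mulrC.
under eq_bigr do rewrite eps_mul mulrC -scalerA.
by rewrite -scaler_sumr comodule_counit mulr_algr.
Qed.

Lemma counit_proj_tensor1 (y : N) : counit_proj (tensorH y (hunit H)) = y.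
Proof.
have [_ [_ [_ [_ [_ [_ [_ [_ [_ [eps_one _]]]]]]]]]] := hH.
transitivity (\sum_p bact ((hunit H p * hcounit H p)%:A) y).
  by apply: eq_bigr => p _; rewrite ffunE -bact_mul mulr_algl scalerA mulrC.
by rewrite -bact_suml -scaler_suml eps_one scale1r bact_one.
Qed.

Lemma tensorHD (x y : N) t : tensorH (x + y) t = tensorH x t + tensorH y t.
Proof. by apply/ffunP => p; rewrite !ffunE bact_addr. Qed.

Lemma tensorH_integralM (t : 'I_n -> k) :
    (forall a r, \sum_x hmul H a x r * t x = hcounit H a * t r) ->
  forall b (y : N), tensorH (bact b y) t = act b (tensorH y t).
Proof.
have [_ [_ [_ [_ comodule_counit]]]] := hB.
move=> integral_t b y; apply/ffunP => p; rewrite !ffunE -bact_mul mulr_algl.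
transitivity (\sum_i \sum_j bact ((hmul H i j p * t j) *: dB b i) y); last first.
  apply: eq_bigr => i _; apply: eq_bigr => j _; rewrite ffunE -bact_mul.
  by rewrite mulr_algr scalerA mulrC.
under eq_bigr do rewrite -bact_suml -scaler_suml.
rewrite -bact_suml; congr bact.
under eq_bigr do rewrite integral_t mulrC -scalerA.
by rewrite -scaler_sumr comodule_counit.
Qed.

Lemma tensorH_inj (t : 'I_n -> k) p : t p != 0 -> injective (tensorH^~ t).
Proof.
move=> tp_neq0 x y /ffunP /(_ p); rewrite !ffunE => /(congr1 (bact (t p)^-1%:A)).
by rewrite -!bact_mul mulr_algl scalerA mulVf // scale1r !bact_one.
Qed.

End TensorWithH.

Section NullHomotopic.

Variables (k : fieldType) (n : nat) (H : hopf_data k n).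
Variables (B : algType k) (dB : B -> 'I_n -> B).
Hypotheses (hH : is_hopf H) (hB : is_comodule_alg H dB).

Lemma id_bhom (M : bmod B) : is_bhom (fun x : M => x).
Proof. by []. Qed.

Lemma projective_in_NH (P : bmod B) : projective_bmod P -> in_NH H dB P.
Proof.
move=> projP; pose PH := tensH_bmod hH hB P; pose pi : PH -> P := counit_proj H (N:=P).
have pi_hom : is_bhom pi by split; [exact: counit_projD | exact: counit_projM].
have pi_surj (y : P) : exists x : PH, pi x = y.
  by exists (tensorH y (hunit H)); exact: counit_proj_tensor1.
have [s [s_hom pi_s]] := projP _ _ _ _ pi_hom pi_surj (id_bhom P).
by exists P, s, pi.
Qed.

Lemma injective_in_NH (I : bmod B) : injective_bmod I -> in_NH H dB I.
Proof.
move=> injI; pose IH := tensH_bmod hH hB I.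
have [t [integral_t [p tp_neq0]]] := left_integral_exists hH.
have j_hom : is_bhom (fun y : I => tensorH y t : IH).
  by split=> [x y | b y]; [exact: tensorHD | exact: tensorH_integralM].
have [r [r_hom r_j]] := injI _ _ _ _ j_hom (tensorH_inj tp_neq0) (id_bhom I).
by exists I, (fun y => tensorH y t), r.
Qed.

Lemma in_NH_iso_zero (M : bmod B) : in_NH H dB M -> iso_zero_in_C H dB M.
Proof.
case=> N [f [g [f_hom [g_hom gf]]]].
by exists N, f, g; do 2!split=> //; move=> x; rewrite gf subr0.
Qed.

End NullHomotopic.

Theorem corollary2p8 (k : fieldType) (n : nat) (H : hopf_data k n)
    (B : algType k) (dB : B -> 'I_n -> B) :
  is_hopf H -> is_comodule_alg H dB ->
  (forall P : bmod B, projective_bmod P -> in_NH H dB P /\ iso_zero_in_C H dB P) /\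
  (forall I : bmod B, injective_bmod I -> in_NH H dB I /\ iso_zero_in_C H dB I).
Proof.
move=> hH hB; split=> [P /(projective_in_NH hH hB) | I /(injective_in_NH hH hB)] NH_M.
  by split; last exact: in_NH_iso_zero.
by split; last exact: in_NH_iso_zero.
Qed.
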